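(* Let $V\neq\emptyset$, let $\kappa$ be a cardinal with $|V|\ge\kappa\ge\aleph_0$, and let $F\colon V\leadsto V$ be a strict multifunction. Then $\mathrm{Wall}_{\kappa}(F,V)$ is a proper filter on $V$.
   Context: A multifunction $F\colon V\leadsto V$ is a map $V\to P(V)$; it is strict if $F(v)\neq\emptyset$ for all $v$. For $B\subset V$, $F_{+}(B)=\{x\in V\mid F(x)\subset B\}$. $\mathrm{Wall}_{\kappa}(F,V)=\{U\subset V\mid |V\setminus F_{+}(U)|<\kappa\}$. A filter on $V$ is a nonempty family $\Phi\subset P(V)$ such that for all $A,B\subset V$: $A\in\Phi$ and $B\in\Phi$ iff $A\cap B\in\Phi$; it is proper if $\emptyset\notin\Phi$. *)

From HB Require Import structures.
From mathcomp Require Import all_boot all_order all_algebra.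
From mathcomp Require Import boolp classical_sets functions cardinality.
Set Implicit Arguments. Unset Strict Implicit. Unset Printing Implicit Defensive.
Local Open Scope classical_set_scope.
Local Open Scope card_scope.

Definition multifun (V : Type) := V -> set V.

Definition strict_mf (V : Type) (F : multifun V) := forall v : V, F v != set0.

Definition Fplus (V : Type) (F : multifun V) (B : set V) : set V :=
  [set x | F x `<=` B].

(* A cardinal kappa is represented as the cardinality of a set K : set Kt.
   |S| < kappa  :=  |S| <= |K| and not |K| <= |S|. *)
Definition card_lt_set (V Kt : Type) (S : set V) (K : set Kt) :=
  (S #<= K) /\ ~ (K #<= S).

Definition Wall (V Kt : Type) (K : set Kt) (F : multifun V) : set (set V) :=
  [set U | card_lt_set (~` Fplus F U) K].

Definition is_filter (V : Type) (Phi : set (set V)) :=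
  Phi != set0 /\ forall A B : set V, (Phi A /\ Phi B) <-> Phi (A `&` B).

Definition proper_filter (V : Type) (Phi : set (set V)) :=
  is_filter Phi /\ ~ Phi set0.

From mathcomp Require Import all_boot all_order all_algebra.
From mathcomp Require Import boolp classical_sets functions cardinality.
From mathcomp Require Import zify.
Local Open Scope classical_set_scope.
Local Open Scope card_scope.

(* If [A] and [B] lie in the wall, the complement of [F_+(A & B)] is the union
   [S1 | S2] of the complements of [F_+(A)] and [F_+(B)], both of cardinality
   below the infinite [kappa].  By comparability of cardinals we may assume
   [S1 #<= S2]; then [S1 | S2] is finite if [S2] is, and otherwise no larger
   than [S2], since an infinite set absorbs a union of two sets no larger than
   itself.  Comparability and absorption both come from Zorn's lemma, the
   latter through a maximal injection [D * bool -> D] with [D] cofinite in [X].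
   Strictness of [F] gives [F_+(set0) = set0], so [set0] would need
   [|V| < kappa]. *)

Lemma fun_card_le {T U} {A : set T} {B : set U} (f : T -> U) :
  set_fun A B f -> set_inj A f -> A #<= B.
Proof.
move=> fAB finj; apply: card_le_trans (subset_card_le (_ : f @` A `<=` B)).
  by have /card_eqPle[] := card_esym (inj_card_eq finj).
by move=> _ [x Ax <-]; exact: fAB.
Qed.

Lemma card_le_fun_ex {T U} {A : set T} {B : set U} : A #<= B -> B !=set0 ->
  exists f : T -> U, set_fun A B f /\ set_inj A f.
Proof.
elim/Ppointed: U B => U B AB [b Bb]; first by case: (no b).
by move/pcard_leP: AB => /injfunPex[f]; exists f.
Qed.

Lemma injrel_card_le {T U} (A : set T) (B : set U) (G : T -> U -> Prop) :
  (forall a b, A a -> G a b -> B b) ->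
  (forall a a' b, G a b -> G a' b -> a = a') ->
  (forall a, A a -> exists b, G a b) -> A #<= B.
Proof.
move=> GB Ginj Gtot.
have [[a0 /Gtot[b0 _]]|/nonemptyPn->] := pselect (A !=set0); last first.
  exact: card_ge0.
have [f Gf] : {f : T -> U & forall a, A a -> G a (f a)}.
  apply: (@choice _ _ (fun a b => A a -> G a b)) => a.
  have [/Gtot[b Gab]|nAa] := pselect (A a); first by exists b.
  by exists b0 => /nAa.
apply: (fun_card_le f) => [a Aa|a a' /set_mem Aa /set_mem Aa' faa'].
  exact: GB Aa (Gf a Aa).
by apply: (Ginj _ _ (f a)); [exact: Gf|rewrite faa'; exact: Gf].
Qed.

Lemma chain_bigcup2 {T} {C : set (set T)} {x y : T} : total_on C subset ->
  (\bigcup_(X in C) X) x -> (\bigcup_(X in C) X) y ->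
  exists2 Z, C Z & Z x /\ Z y.
Proof.
move=> Ctot [X CX Xx] [Y CY Yy].
have [XY|YX] := Ctot _ _ CX CY.
- by exists Y => //; split=> //; exact: XY.
- by exists X => //; split=> //; exact: YX.
Qed.

Definition partial_bij {T U} (A : set T) (B : set U) : set (set (T * U)) :=
  fun G => [/\ forall a b, G (a, b) -> A a /\ B b,
    forall a b b', G (a, b) -> G (a, b') -> b = b' &
    forall a a' b, G (a, b) -> G (a', b) -> a = a'].

Lemma partial_bij_bigcup {T U} (A : set T) (B : set U) (C : set (set (T * U))) :
  C `<=` partial_bij A B -> total_on C subset ->
  partial_bij A B (\bigcup_(G in C) G).
Proof.
move=> CP Ctot; split.
- by move=> a b [G /CP[GAB _ _] /GAB].
- move=> a b b' Gab Gab'.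
  have [G /CP[_ Gf _] [Hab Hab']] := chain_bigcup2 Ctot Gab Gab'.
  exact: Gf Hab Hab'.
- move=> a a' b Gab Ga'b.
  have [G /CP[_ _ Gi] [Hab Ha'b]] := chain_bigcup2 Ctot Gab Ga'b.
  exact: Gi Hab Ha'b.
Qed.

Lemma partial_bij_setU1 {T U} (A : set T) (B : set U) G a b :
  partial_bij A B G -> A a -> B b ->
  (forall b', ~ G (a, b')) -> (forall a', ~ G (a', b)) ->
  partial_bij A B (G `|` [set (a, b)]).
Proof.
move=> [GAB Gf Gi] Aa Bb na nb; split.
- by move=> x y [/GAB//|/pair_equal_spec[-> ->]].
- move=> x y y' [Gxy|/pair_equal_spec[-> ->]] [Gxy'|/pair_equal_spec[xa ->]].
  + exact: Gf Gxy Gxy'.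
  + by case: (na y); rewrite -xa.
  + by case: (na y').
  + by [].
- move=> x x' y [Gxy|/pair_equal_spec[-> ->]] [Gx'y|/pair_equal_spec[-> yb]].
  + exact: Gi Gxy Gx'y.
  + by case: (nb x); rewrite -yb.
  + by case: (nb x').
  + by [].
Qed.

Lemma card_le_total {T U} (A : set T) (B : set U) : A #<= B \/ B #<= A.
Proof.
have [G [bijG Gmax]] := Zorn_bigcup (@partial_bij_bigcup _ _ A B).
have [GAB Gf Gi] := bijG.
have [Gtot|] := pselect (forall a, A a -> exists b, G (a, b)).
  left; apply: (@injrel_card_le _ _ A B (fun a b => G (a, b))) => //.
  by move=> a b _ /GAB[].
have [Gsurj|] := pselect (forall b, B b -> exists a, G (a, b)).
  right; apply: (@injrel_card_le _ _ B A (fun b a => G (a, b))) => //.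
  - by move=> y x _ /GAB[].
  - by move=> y y' x; apply: Gf.
move=> /existsNP[b /not_implyP[Bb nb]] /existsNP[a /not_implyP[Aa na]].
exfalso; apply: (Gmax (G `|` [set (a, b)])).
  split=> [|/(_ (a, b) (or_intror erefl)) Gab]; first exact: subsetUl.
  by apply: na; exists b.
apply: partial_bij_setU1 => //.
- by move=> b' Gab'; apply: na; exists b'.
- by move=> a' Ga'b; apply: nb; exists a'.
Qed.

Definition doubling_dom {T} (G : set (T * bool * T)) : set T :=
  [set x | exists y, G (x, false, y)].

(* [G] is the graph of an injection [D * bool -> D] with [D := doubling_dom G],
   a subset of [X]. *)
Definition doubling_graph {T} (X : set T) : set (set (T * bool * T)) :=
  fun G => [/\ forall x b y, G (x, b, y) -> X x /\ X y,
    forall x b y y', G (x, b, y) -> G (x, b, y') -> y = y',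
    forall x b x' b' y, G (x, b, y) -> G (x', b', y) -> x = x' /\ b = b',
    forall x b y b', G (x, b, y) -> exists y', G (x, b', y') &
    forall x b y, G (x, b, y) -> doubling_dom G y].

Section DoublingGraph.
Context {T : Type} (X : set T).

Lemma doubling_graph_dom {G x b y} : doubling_graph X G -> G (x, b, y) ->
  doubling_dom G x /\ doubling_dom G y.
Proof.
by move=> [_ _ _ Gt Gr] Gxy; split; [exact: Gt _ _ _ false Gxy|exact: Gr Gxy].
Qed.

Lemma doubling_graph_bigcup (C : set (set (T * bool * T))) :
  C `<=` doubling_graph X -> total_on C subset ->
  doubling_graph X (\bigcup_(G in C) G).
Proof.
move=> CP Ctot; split.
- by move=> x b y [G /CP[GX _ _ _ _] /GX].
- move=> x b y y' Gy Gy'.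
  have [G /CP[_ Gf _ _ _] [Hy Hy']] := chain_bigcup2 Ctot Gy Gy'.
  exact: Gf Hy Hy'.
- move=> x b x' b' y Gx Gx'.
  have [G /CP[_ _ Gi _ _] [Hx Hx']] := chain_bigcup2 Ctot Gx Gx'.
  exact: Gi Hx Hx'.
- move=> x b y b' [G CG Gxy]; have [_ _ _ Gt _] := CP _ CG.
  by have [y' Gy'] := Gt _ _ _ b' Gxy; exists y', G.
- move=> x b y [G CG Gxy]; have [_ _ _ _ Gr] := CP _ CG.
  by have [y' Gy'] := Gr _ _ _ Gxy; exists y', G.
Qed.

Lemma doubling_graph_setU G1 G2 : doubling_graph X G1 -> doubling_graph X G2 ->
  (forall x, doubling_dom G1 x -> ~ doubling_dom G2 x) ->
  doubling_graph X (G1 `|` G2).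
Proof.
move=> dG1 dG2 dis.
have [X1 f1 i1 t1 r1] := dG1; have [X2 f2 i2 t2 r2] := dG2.
have cross x b y x' b' y' :
    G1 (x, b, y) -> G2 (x', b', y') -> x <> x' /\ y <> y'.
  move=> /(doubling_graph_dom dG1)[Dx Dy] /(doubling_graph_dom dG2)[Dx' Dy'].
  by split=> E; [apply: (dis x)|apply: (dis y)]; rewrite // E.
split.
- by move=> x b y [/X1|/X2].
- move=> x b y y' [H|H] [H'|H']; [exact: f1 H H'| | |exact: f2 H H'].
  + by case: (cross _ _ _ _ _ _ H H').1.
  + by case: (cross _ _ _ _ _ _ H' H).1.
- move=> x b x' b' y [H|H] [H'|H']; [exact: i1 H H'| | |exact: i2 H H'].
  + by case: (cross _ _ _ _ _ _ H H').2.
  + by case: (cross _ _ _ _ _ _ H' H).2.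
- move=> x b y b' [/(t1 _ _ _ b')[y' H]|/(t2 _ _ _ b')[y' H]].
  + by exists y'; left.
  + by exists y'; right.
- by move=> x b y [/r1[y' H]|/r2[y' H]]; exists y'; [left|right].
Qed.

Definition nat_doubling (e : nat -> T) : set (T * bool * T) :=
  fun '(x, b, y) => exists n, x = e n /\ y = e (2 * n + b)%N.

Lemma doubling_graph_nat {e} : (forall n, X (e n)) -> injective e ->
  doubling_graph X (nat_doubling e).
Proof.
move=> Xe einj; split.
- by move=> x b y [n [-> ->]].
- by move=> x b y y' [n [-> ->]] [m [/einj <- ->]].
- move=> x b x' b' y [n [-> ->]] [m [-> /einj nbmb]].
  have [-> ->] : n = m /\ b = b'.
    by case: b b' nbmb => -[] /= ?; split=> //; lia.
  by split.
- by move=> x b y b' [n [-> _]]; exists (e (2 * n + b')%N), n.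
- move=> x b y [n [_ ->]].
  by exists (e (2 * (2 * n + b) + false)%N), (2 * n + b)%N.
Qed.

Lemma doubling_graph_card_le G : doubling_graph X G ->
  doubling_dom G `*` [set: bool] #<= doubling_dom G.
Proof.
move=> [_ _ Gi Gt Gr].
apply: (@injrel_card_le _ _ _ _ (fun p y => G (p.1, p.2, y))).
- by move=> [x b] y _ /Gr.
- by move=> [x b] [x' b'] y /= /Gi/[apply] -[-> ->].
- by move=> [x b] [[y Gy] _]; exact: Gt _ _ _ b Gy.
Qed.

(* Otherwise a copy of [nat] in [X `\` doubling_dom G] could be doubled and
   adjoined to [G]. *)
Lemma maximal_doubling_graph_cofinite G : doubling_graph X G ->
  (forall G', G `<` G' -> ~ doubling_graph X G') ->
  finite_set (X `\` doubling_dom G).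
Proof.
move=> dG Gmax; apply: contrapT => XDinf.
have [e [eXD einj]] :=
  card_le_fun_ex (proj1 (infiniteP _) XDinf) (infinite_setN0 XDinf).
have {}eXD n : (X `\` doubling_dom G) (e n) by exact: eXD.
have {}einj : injective e by move=> m n; apply: einj; rewrite in_setT.
have dGe := doubling_graph_nat (fun n => (eXD n).1) einj.
apply: (Gmax (G `|` nat_doubling e)).
  split=> [|/(_ (e 0, false, e 0)%N) Ge0]; first exact: subsetUl.
  by apply: (eXD 0%N).2; exists (e 0%N); apply: Ge0; right; exists 0%N.
apply: doubling_graph_setU dG dGe _ => x DGx [y [n [xn _]]].
by apply: (eXD n).2; rewrite -xn.
Qed.

Lemma exists_cofinite_doubling :
  exists D, [/\ D `<=` X, finite_set (X `\` D) & D `*` [set: bool] #<= D].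
Proof.
have [G [dG Gmax]] := Zorn_bigcup doubling_graph_bigcup.
exists (doubling_dom G); split.
- by have [GX _ _ _ _] := dG; move=> x [y /GX[]].
- exact: maximal_doubling_graph_cofinite.
- exact: doubling_graph_card_le.
Qed.

End DoublingGraph.

Lemma finite_card_le_infinite {T U} (A : set T) (B : set U) :
  finite_set A -> infinite_set B -> A #<= B.
Proof.
move=> /finite_set_leP[n An] /infiniteP NB.
exact: card_le_trans An (card_le_trans (subset_card_le (subsetT _)) NB).
Qed.

Lemma doubling_card_le_setU {T U} (D : set T) (A B : set U) :
  D `*` [set: bool] #<= D -> A #<= D -> B #<= D -> A `|` B #<= D.
Proof.
move=> DD AD BD.
have [D0|/nonemptyPn D0] := pselect (D !=set0); last first.
  by move: AD BD; rewrite D0 => /card_le0P-> /card_le0P->; rewrite setU0.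
apply: card_le_trans DD.
have [fa [faD fainj]] := card_le_fun_ex AD D0.
have [fb [fbD fbinj]] := card_le_fun_ex BD D0.
apply: (fun_card_le
  (fun u => if pselect (A u) then (fa u, false) else (fb u, true))).
  move=> u ABu; case: pselect => Au; split=> //; first exact: faD.
  by apply: fbD; case: ABu.
move=> u v /set_mem ABu /set_mem ABv.
case: pselect => Au; case: pselect => Av /pair_equal_spec[fuv] // _.
  exact: fainj (mem_set Au) (mem_set Av) fuv.
have Bu : B u by case: ABu.
have Bv : B v by case: ABv.
exact: fbinj (mem_set Bu) (mem_set Bv) fuv.
Qed.

Lemma card_le_setU_infinite {T U} {X : set T} {A B : set U} :
  infinite_set X -> A #<= X -> B #<= X -> A `|` B #<= X.
Proof.
move=> Xinf AX BX; have [D [DX XDfin DD]] := exists_cofinite_doubling X.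
have Dinf : infinite_set D.
  by move=> Dfin; apply: Xinf; rewrite -(setDUK DX) finite_setU.
have XD : X #<= D.
  rewrite -{1}(setDUK DX); apply: doubling_card_le_setU DD (card_lexx D) _.
  exact: finite_card_le_infinite.
apply: card_le_trans (subset_card_le DX).
exact: doubling_card_le_setU DD (card_le_trans AX XD) (card_le_trans BX XD).
Qed.

Lemma sub_card_lt_set {T U} (K : set T) (S S' : set U) :
  S `<=` S' -> card_lt_set S' K -> card_lt_set S K.
Proof.
move=> SS' [S'K KS']; split.
  exact: card_le_trans (subset_card_le SS') S'K.
by move=> KS; apply: KS'; apply: card_le_trans KS (subset_card_le SS').
Qed.

Lemma card_lt_setU {T U} (K : set T) (S1 S2 : set U) : infinite_set K ->
  card_lt_set S1 K -> card_lt_set S2 K -> card_lt_set (S1 `|` S2) K.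
Proof.
move=> Kinf [S1K KS1] [S2K KS2]; split; first exact: card_le_setU_infinite.
wlog S12 : S1 S2 S1K KS1 S2K KS2 / S1 #<= S2.
  move=> wlogS; have [|S21] := card_le_total S1 S2; first exact: wlogS.
  by rewrite setUC; exact: wlogS.
move=> KS; have [S2fin|S2inf] := pselect (finite_set S2).
  apply: Kinf; apply: card_le_finite KS _; rewrite finite_setU; split=> //.
  exact: card_le_finite S12 S2fin.
apply: KS2; apply: card_le_trans KS _.
exact: card_le_setU_infinite S2inf S12 (card_lexx S2).
Qed.

Lemma FplusI {V} (F : multifun V) (A B : set V) :
  Fplus F (A `&` B) = Fplus F A `&` Fplus F B.
Proof. by apply/seteqP; split=> x; rewrite /Fplus /= subsetI. Qed.

Lemma FplusT {V} (F : multifun V) : Fplus F setT = setT.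
Proof. by apply/seteqP; split=> x // _ y. Qed.

Lemma strict_Fplus0 {V} (F : multifun V) : strict_mf F -> Fplus F set0 = set0.
Proof.
move=> Fs; apply/seteqP; split=> x // Fx0.
by have /set0P[y Fy] := Fs x; exact: Fx0 _ Fy.
Qed.

Theorem lemma6p6 (V : Type) (Kt : Type) (K : set Kt) (F : multifun V) :
  [set: V] != set0 ->
  infinite_set K ->
  K #<= [set: V] ->
  strict_mf F ->
  proper_filter (Wall K F).
Proof.
move=> _ Kinf KV Fs; split; first split.
- apply/set0P; exists setT; rewrite /Wall /= FplusT setCT.
  split=> // /card_le0P K0.
  by apply: Kinf; rewrite K0; exact: finite_set0.
- move=> A B; rewrite /Wall /= FplusI setCI.
  split=> [[WA WB]|WAB]; first exact: card_lt_setU.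
  by split; apply: sub_card_lt_set WAB; [exact: subsetUl|exact: subsetUr].
- by rewrite /Wall /= strict_Fplus0 // setC0 => -[_]; apply.
Qed.
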